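(* Let $n>1$ and let $s=(x_1,\dots,x_n)\in\mathbb{T}_n$ be a unit (i.e. $x_1\neq0$). Writing $(s^{-1})_p$ for the $p$-th component of $s^{-1}$ in $n$-vector format, for every $k\le n$ and every $j<k$, $$\frac{\partial (s^{-1})_k}{\partial x_j}=\frac{\partial (s^{-1})_{k-j+1}}{\partial x_1}.$$
   Context: $\mathbb{T}_n$ is the $n$-dimensional real algebra of upper triangular Toeplitz $n\times n$ matrices under matrix multiplication. An element $s=(x_1,\dots,x_n)\in\mathbb{T}_n$ denotes the upper triangular Toeplitz matrix whose entries on the successive diagonals, starting with the main diagonal and proceeding to the right, are $x_1,\dots,x_n$; equivalently $s=x_1\mathbf{1}+x_2\mathbf{z}+\dots+x_n\mathbf{z}^{n-1}$ where $\mathbf{z}$ has ones on the superdiagonal and zeros elsewhere. The inverse $s^{-1}$ is again in $\mathbb{T}_n$ and is written in the same vector format. *)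

From HB Require Import structures.
From mathcomp Require Import all_boot all_order all_algebra.
From mathcomp Require Import all_classical all_reals all_analysis.
Set Implicit Arguments. Unset Strict Implicit. Unset Printing Implicit Defensive.
Import Order.TTheory GRing.Theory Num.Theory.
Import numFieldNormedType.Exports.
Local Open Scope ring_scope.

Section Toeplitz.
Variable R : realType.

Definition mxentry (m n : nat) (A : 'M[R]_(m, n)) (i j : nat) : R :=
  match (insub i : option 'I_m), (insub j : option 'I_n) with
  | Some i', Some j' => A i' j'
  | _, _ => 0
  end.

(* Paper's 1-based component x_p of s = (x_1, ..., x_n), stored as a row vector. *)
Definition tcomp (n : nat) (x : 'rV[R]_n) (p : nat) : R := mxentry x 0 p.-1.

(* The upper triangular Toeplitz matrix x_1 1 + x_2 z + ... + x_n z^(n-1):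
   entry (i, j) (0-based) is x_(j-i+1) if i <= j, else 0. *)
Definition toeplitz (n : nat) (x : 'rV[R]_n) : 'M[R]_n :=
  \matrix_(i < n, j < n) (if (i <= j)%N then tcomp x (j - i).+1 else 0).

(* Paper's 1-based p-th component of s^{-1} in vector format: entry (1, p)
   of the inverse matrix (first row of an upper triangular Toeplitz matrix). *)
Definition tinv (n : nat) (x : 'rV[R]_n) (p : nat) : R :=
  mxentry (invmx (toeplitz x)) 0 p.-1.

Definition evec (n : nat) (j : nat) : 'rV[R]_n :=
  \row_(i < n) (if (i : nat) == j.-1 then 1 else 0).

Definition partial (n : nat) (f : 'rV[R]_n -> R) (x : 'rV[R]_n) (j : nat) : R :=
  'D_(evec n j) f x.

End Toeplitz.

(* The Toeplitz matrix is linear in s, with T(s) = x_1 + x_2 Z + ... + x_n Z^(n-1)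
   for the nilpotent shift Z, so moving along x_j adds a multiple of Z^(j-1).
   By the resolvent identity the derivative of T^-1 in that direction is
   -T^-1 Z^(j-1) T^-1 = -T^-2 Z^(j-1), since T, hence T^-1, commutes with Z;
   and right multiplication by Z^(j-1) shifts the first row by j-1 places,
   which is the passage from index k to k-j+1 and from x_j to x_1. *)

From HB Require Import structures.
From mathcomp Require Import all_boot all_order all_algebra.
From mathcomp Require Import all_classical all_reals all_analysis.
From mathcomp Require Import zify.
Import Order.TTheory GRing.Theory Num.Theory.
Import numFieldNormedType.Exports.
Local Open Scope ring_scope.
Local Open Scope classical_set_scope.

Section EntrywiseLimits.
Context {R : numFieldType} {T : Type} {F : set_system T} {FF : Filter F}.

Lemma cvg_det {m} {M : T -> 'M[R]_m} {A : 'M[R]_m} :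
  (forall i j, M h i j @[h --> F] --> A i j) ->
  \det (M h) @[h --> F] --> \det A.
Proof.
move=> MA; under eq_cvg do rewrite /determinant.
apply: (cvg_big add_continuous) => // s _.
by apply: cvgMl_tmp; apply: (cvg_big mul_continuous) => // i _.
Qed.

Lemma cvg_adj {m} {M : T -> 'M[R]_m} {A : 'M[R]_m} :
  (forall i j, M h i j @[h --> F] --> A i j) ->
  forall i j, \adj (M h) i j @[h --> F] --> \adj A i j.
Proof.
move=> MA i j; rewrite mxE; under eq_cvg do rewrite mxE.
apply: cvgMl_tmp; apply: cvg_det => a b.
rewrite !mxE; under eq_cvg do rewrite !mxE; exact: MA.
Qed.

Lemma cvg_invmx {m} {M : T -> 'M[R]_m} {A : 'M[R]_m} : A \in unitmx ->
  (forall i j, M h i j @[h --> F] --> A i j) ->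
  forall i j, invmx (M h) i j @[h --> F] --> invmx A i j.
Proof.
move=> uA MA i j.
have detA0 : \det A != 0 by rewrite -unitfE -unitmxE.
have detMA : \det (M h) @[h --> F] --> \det A := cvg_det MA.
have detM0 : \forall h \near F, \det (M h) != 0 by exact: cvgr_neq0 detMA detA0.
rewrite /invmx uA mxE.
apply: cvg_trans (cvgM (cvgV detA0 detMA) (cvg_adj MA i j)).
apply: near_eq_cvg; near=> h.
have uM : M h \in unitmx by rewrite unitmxE unitfE; exact: (near detM0 h).
by rewrite uM /= !mxE.
Unshelve. all: by end_near.
Qed.

End EntrywiseLimits.

Section InverseDerivative.
Context {R : numFieldType} {n : nat}.

Lemma invmx_resolvent {S T : 'M[R]_n} : S \in unitmx -> T \in unitmx ->
  invmx S = invmx T - invmx T *m (S - T) *m invmx S.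
Proof.
move=> uS uT.
by rewrite mulmxBr mulmxBl mulVmx // mul1mx -mulmxA mulmxV // mulmx1 opprB addrC subrK.
Qed.

Lemma cvg_invmx_difference_quotient (N T : 'M[R]_n) i j : T \in unitmx ->
  h^-1 * (invmx (h *: N + T) i j - invmx T i j) @[h --> 0^'] -->
  - (invmx T *m N *m invmx T) i j.
Proof.
move=> uT.
have NT_T a b : (h *: N + T) a b @[h --> 0^'] --> T a b.
  under eq_cvg do rewrite !mxE.
  apply: cvg_within_filter.
  have : h * N a b + T a b @[h --> nbhs (0 : R)] --> 0 * N a b + T a b.
    by apply: cvgD; [apply: cvgMr_tmp; exact: cvg_id | exact: cvg_cst].
  by rewrite mul0r add0r.
have detNT0 : \forall h \near 0^', \det (h *: N + T) != 0.
  by apply: cvgr_neq0 (cvg_det NT_T) _; rewrite -unitfE -unitmxE.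
have lim_sum : - \sum_l (invmx T *m N) i l * invmx (h *: N + T) l j
    @[h --> 0^'] --> - (invmx T *m N *m invmx T) i j.
  rewrite mxE; apply: cvgN; apply: (cvg_big add_continuous) => // l _.
  exact: cvgMl_tmp (cvg_invmx (M := fun h => h *: N + T) uT NT_T l j).
apply: cvg_trans lim_sum; apply: near_eq_cvg; near=> h.
have uNT : h *: N + T \in unitmx by rewrite unitmxE unitfE; exact: (near detNT0 h).
have h0 : h != 0 by exact: (near (nbhs_dnbhs_neq 0) h).
rewrite [in RHS](invmx_resolvent uNT uT) addrK -scalemxAr -scalemxAl.
by set TN := invmx T *m N; rewrite !mxE addrAC subrr add0r mulrN mulrA mulVf // mul1r.
Unshelve. all: by end_near.
Qed.

End InverseDerivative.

Section ShiftMatrix.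
Variables (R : pzRingType) (n : nat).

Definition shiftmx : 'M[R]_n.+1 := \matrix_(i, j) (j == i.+1 :> nat)%:R.

Lemma shiftmxX d (i j : 'I_n.+1) : (shiftmx ^+ d) i j = (j == (i + d)%N :> nat)%:R.
Proof.
elim: d i => [|d IHd] i; first by rewrite expr0 addn0 mxE eq_sym.
rewrite exprS -mulmxE mxE.
under eq_bigr do rewrite mxE IHd mulr_natl mulrb.
rewrite -big_mkcond (big_ord1_eq _ (fun k => (j == (k + d)%N :> nat)%:R)) addSnnS.
case: ltnP => // ni1; suff /negbTE -> : j != (i + d.+1)%N :> nat by [].
by apply/eqP; move: (ltn_ord j); lia.
Qed.

Lemma mulmx_shiftmxXE d (A : 'M[R]_n.+1) i (j j' : 'I_n.+1) :
  j = (j' + d)%N :> nat -> (A *m shiftmx ^+ d) i j = A i j'.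
Proof.
move=> jE; rewrite mxE (bigD1 j') //= shiftmxX jE eqxx mulr1 big1 ?addr0 // => l lj'.
by rewrite shiftmxX jE eqn_add2r eq_sym val_eqE (negbTE lj') mulr0.
Qed.

End ShiftMatrix.

Section ToeplitzAlgebra.
Context {R : realType}.

Lemma mxentryE {m p} (A : 'M[R]_(m, p)) {i j} (im : (i < m)%N) (jp : (j < p)%N) :
  mxentry A i j = A (Ordinal im) (Ordinal jp).
Proof.
rewrite /mxentry; case: insubP => [i' _ i'E|]; last by rewrite im.
case: insubP => [j' _ j'E|]; last by rewrite jp.
by congr (A _ _); apply: val_inj.
Qed.

Lemma toeplitzE {n} (x : 'rV[R]_n) {i j : 'I_n} (jin : (j - i < n)%N) :
  toeplitz x i j = if (i <= j)%N then x 0 (Ordinal jin) else 0.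
Proof. by rewrite mxE /tcomp (mxentryE _ (ltn0Sn 0) jin). Qed.

Lemma toeplitz_is_linear n : linear (@toeplitz R n).
Proof.
move=> a x y; apply/matrixP => i j.
have jin : (j - i < n)%N by rewrite (leq_ltn_trans (leq_subr _ _)).
rewrite !mxE /tcomp !(mxentryE _ (ltn0Sn 0) jin) !mxE.
by case: ifP; rewrite ?mulr0 ?addr0.
Qed.

HB.instance Definition _ n :=
  GRing.isLinear.Build R 'rV[R]_n 'M[R]_n _ (@toeplitz R n) (@toeplitz_is_linear n).

Context {n : nat}.

Lemma toeplitz_delta (k : 'I_n.+1) : toeplitz (delta_mx 0 k) = shiftmx R n ^+ k.
Proof.
apply/matrixP => i j.
have jin : (j - i < n.+1)%N by rewrite (leq_ltn_trans (leq_subr _ _)).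
rewrite (toeplitzE _ jin) shiftmxX !mxE eqxx /= -val_eqE /=.
case: leqP => ij; first by congr (nat_of_bool _)%:R; apply/eqP/eqP; lia.
by rewrite (_ : _ == _ = false) //; apply/eqP; lia.
Qed.

Lemma toeplitz_sum (x : 'rV[R]_n.+1) :
  toeplitz x = \sum_(k < n.+1) x 0 k *: shiftmx R n ^+ k.
Proof.
rewrite {1}(row_sum_delta x) linear_sum.
by apply: eq_bigr => k _; rewrite linearZ /= toeplitz_delta.
Qed.

Lemma toeplitz_shiftmxX_comm (x : 'rV[R]_n.+1) d :
  GRing.comm (toeplitz x) (shiftmx R n ^+ d).
Proof.
apply/commr_sym; rewrite toeplitz_sum; apply: commr_sum => k _.
by rewrite /GRing.comm -scalerAl -scalerAr -!exprD addnC.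
Qed.

Lemma toeplitz_unitmx (x : 'rV[R]_n.+1) : x 0 0 != 0 -> toeplitz x \in unitmx.
Proof.
move=> x00; rewrite unitmxE unitfE -det_tr det_trig; last first.
  apply/is_trig_mxP => i j ji; rewrite mxE.
  have ijn : (i - j < n.+1)%N by rewrite (leq_ltn_trans (leq_subr _ _)).
  by rewrite (toeplitzE _ ijn) leqNgt ji.
rewrite prodf_seq_neq0; apply/allP => i _ /=; rewrite mxE.
have iin : (i - i < n.+1)%N by rewrite subnn.
by rewrite (toeplitzE _ iin) leqnn; congr (x _ _ != 0): x00; apply: val_inj; rewrite /= subnn.
Qed.

Lemma evec_delta (k : 'I_n.+1) : evec R n.+1 k.+1 = delta_mx 0 k.
Proof. by apply/matrixP => i j; rewrite !mxE (ord1 i) eqxx -val_eqE; case: ifP. Qed.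

Lemma tinvE (x : 'rV[R]_n.+1) p (pn : (p.-1 < n.+1)%N) :
  tinv x p = invmx (toeplitz x) 0 (Ordinal pn).
Proof. by rewrite /tinv (mxentryE _ (ltn0Sn n) pn). Qed.

End ToeplitzAlgebra.

Section ToeplitzInverse.
Context {R : realType} {n : nat}.

Lemma invmx_toeplitz_shiftmxX_comm (x : 'rV[R]_n.+1) d :
  invmx (toeplitz x) *m shiftmx R n ^+ d = shiftmx R n ^+ d *m invmx (toeplitz x).
Proof. exact/esym/commrV/commr_sym/toeplitz_shiftmxX_comm. Qed.

Lemma partial_tinv (x : 'rV[R]_n.+1) (j : 'I_n.+1) {p} (pn : (p.-1 < n.+1)%N) :
  x 0 0 != 0 ->
  partial (fun y => tinv y p) x j.+1 =
  - (invmx (toeplitz x) *m shiftmx R n ^+ j *m invmx (toeplitz x)) 0 (Ordinal pn).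
Proof.
move=> x00; rewrite /partial /derive.
have -> : (fun h => h^-1 *: (((fun y => tinv y p) \o shift x) (h *: evec R n.+1 j.+1) - tinv x p))
  = (fun h => h^-1 * (invmx (h *: shiftmx R n ^+ j + toeplitz x) 0 (Ordinal pn)
                      - invmx (toeplitz x) 0 (Ordinal pn))).
  by apply/funext => h /=; rewrite !tinvE linearP /= evec_delta toeplitz_delta.
apply: cvg_lim => //; apply: cvg_invmx_difference_quotient.
exact: toeplitz_unitmx.
Qed.

End ToeplitzInverse.

Theorem lemma10p3 (R : realType) (n : nat) (x : 'rV[R]_n)
  (hn : (1 < n)%N) (hunit : tcomp x 1 != 0) (k j : nat)
  (hj1 : (1 <= j)%N) (hjk : (j < k)%N) (hkn : (k <= n)%N) :
  partial (fun y : 'rV[R]_n => tinv y k) x j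
  = partial (fun y : 'rV[R]_n => tinv y (k - j + 1)) x 1.
Proof.
case: n x hn hkn hunit => [//|n] x _ kn x1.
have x00 : x 0 0 != 0 by rewrite /tcomp (mxentryE _ (ltn0Sn 0) (ltn0Sn n)) in x1.
have kn' : (k.-1 < n.+1)%N by lia.
have k'n : ((k - j + 1).-1 < n.+1)%N by lia.
have jn : (j.-1 < n.+1)%N by lia.
rewrite -[in LHS](prednK hj1) (partial_tinv x (Ordinal jn) kn' x00).
rewrite (partial_tinv x ord0 k'n x00) expr0 mulmx1; congr (- _).
rewrite -mulmxA -invmx_toeplitz_shiftmxX_comm mulmxA.
by apply: mulmx_shiftmxXE => /=; lia.
Qed.
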